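(* Let $(\alpha_k)_{k=0}^\infty$ be a strictly decreasing sequence of positive numbers, and let $g\in D(A^{\alpha_0})$ with $Q_ng\ne0$ for all $n$. (a) Set $\tilde\Gamma_{k,n}=\|Q_ng\|_{D(A^{\alpha_{k-1}})}$, $w_k=0$ and $\tilde w_{k,n}=-Q_ng/\tilde\Gamma_{k,n}$ for $k,n\ge1$. Then $P_ng\approx g+\sum_{k=1}^\infty\tilde\Gamma_{k,n}\cdot0$ is a degenerate expansion in the nested family $\mathcal Z=(D(A^{\alpha_k}))_{k=0}^\infty$ (with remainders $\tilde w_{k,n}$), and moreover $\|\tilde w_{k,n}\|_{D(A^{\alpha_{k-1}})}=1$ for all $k,n$. (b) Let $\beta=\inf_k\alpha_k$ and $s\in[0,\beta]$. Set $\Gamma_{k,n}=\|Q_ng\|_{D(A^{\alpha_k})}$ and $w_{k,n}=-Q_ng/\Gamma_{k,n}$. Then $P_ng\approx g+\sum_{k=1}^\infty\Gamma_{k,n}\cdot0$ is a degenerate expansion in $D(A^s)$ (with remainders $w_{k,n}$).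
   Context: $A$ is the Stokes operator (periodic or no-slip, three-dimensional) with eigenvalues $0<\lambda_1\le\lambda_2\le\cdots\to\infty$ and orthonormal eigenbasis $\{\varphi_j\}$ of the space $H$; $D(A^\alpha)=\{\sum c_j\varphi_j:\sum\lambda_j^{2\alpha}|c_j|^2<\infty\}$ with norm $\|u\|_{D(A^\alpha)}=(\sum\lambda_j^{2\alpha}|c_j|^2)^{1/2}$; $P_n$ is the orthogonal projection onto $\mathrm{span}\{\varphi_1,\ldots,\varphi_n\}$ and $Q_n=I-P_n$. Expansions: for nested normed spaces $Z_0\subset Z_1\subset\cdots$ with continuous embeddings, a degenerate expansion $v_n\approx v+\sum_{k=1}^\infty\Gamma_{k,n}w_k$ of a sequence $(v_n)\subset Z_0$ means: $v\in Z_0$, $w_k\in Z_k$, $w_{k,n}\in Z_{k-1}$, $\Gamma_{k,n}>0$ for all $n,k\ge1$ with $\Gamma_{1,n}\to0$, $\Gamma_{k+1,n}/\Gamma_{k,n}\to0$ and $\|w_{k,n}-w_k\|_{Z_k}\to0$ for each $k$, $v_n=v+\sum_{j=1}^{k-1}\Gamma_{j,n}w_j+\Gamma_{k,n}w_{k,n}$ for all $n,k$, and either $w_k=0$ for all $k$, or for some $N\ge1$, $\|w_k\|_{Z_k}=1$ for $k\le N$ and $w_k=0$ for $k>N$. ''In a normed space $Z$'' means $Z_k=Z$ for all $k$. *)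

From Stdlib Require Import Reals.
From Coquelicot Require Import Coquelicot.
Open Scope R_scope.

(* Elements of H are represented by their coefficient sequences w.r.t. the
   orthonormal eigenbasis: c j is the coefficient of phi_{j+1}. *)
Definition elt := nat -> R.

Definition ezero : elt := fun _ => 0.
Definition eadd (a b : elt) : elt := fun j => a j + b j.
Definition esub (a b : elt) : elt := fun j => a j - b j.
Definition escale (r : R) (a : elt) : elt := fun j => r * a j.

(* Eigenvalues lam j = lambda_{j+1} of the Stokes operator:
   0 < lambda_1 <= lambda_2 <= ... -> +oo. *)
Definition stokes_eigen (lam : nat -> R) : Prop :=
  0 < lam 0%nat /\ (forall j, lam j <= lam (S j)) /\ is_lim_seq lam p_infty.

Definition DA_term (lam : nat -> R) (a : R) (c : elt) (j : nat) : R :=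
  Rpower (lam j) (2 * a) * (c j) ^ 2.

Definition inDA (lam : nat -> R) (a : R) (c : elt) : Prop :=
  ex_series (DA_term lam a c).

Definition normDA (lam : nat -> R) (a : R) (c : elt) : R :=
  sqrt (Series (DA_term lam a c)).

Definition Pn (n : nat) (c : elt) : elt :=
  fun j => if Nat.ltb j n then c j else 0.
Definition Qn (n : nat) (c : elt) : elt :=
  fun j => if Nat.ltb j n then 0 else c j.

Fixpoint psum (Gam : nat -> nat -> R) (w : nat -> elt) (n m : nat) : elt :=
  match m with
  | O => ezero
  | S m' => eadd (psum Gam w n m') (escale (Gam (S m') n) (w (S m')))
  end.

(* Degenerate expansion v_n ≈ v + sum_k Gam_{k,n} w_k in the nested family
   (Z_k) with membership Zmem k and norm Znorm k, remainders wkn k n.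
   Indices k, n range over k, n >= 1. *)
Definition degenerate_expansion (Zmem : nat -> elt -> Prop)
  (Znorm : nat -> elt -> R) (vn : nat -> elt) (v : elt) (w : nat -> elt)
  (wkn : nat -> nat -> elt) (Gam : nat -> nat -> R) : Prop :=
  Zmem 0%nat v /\
  (forall k, (1 <= k)%nat -> Zmem k (w k)) /\
  (forall k n, (1 <= k)%nat -> (1 <= n)%nat -> Zmem (k - 1)%nat (wkn k n)) /\
  (forall k n, (1 <= k)%nat -> (1 <= n)%nat -> 0 < Gam k n) /\
  is_lim_seq (fun n => Gam 1%nat n) 0 /\
  (forall k, (1 <= k)%nat -> is_lim_seq (fun n => Gam (S k) n / Gam k n) 0) /\
  (forall k, (1 <= k)%nat -> is_lim_seq (fun n => Znorm k (esub (wkn k n) (w k))) 0) /\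
  (forall n k, (1 <= n)%nat -> (1 <= k)%nat ->
     vn n = eadd (eadd v (psum Gam w n (k - 1))) (escale (Gam k n) (wkn k n))) /\
  ((forall k, (1 <= k)%nat -> w k = ezero) \/
   exists N, (1 <= N)%nat /\
     (forall k, (1 <= k)%nat -> (k <= N)%nat -> Znorm k (w k) = 1) /\
     (forall k, (N < k)%nat -> w k = ezero)).

From Stdlib Require Import Reals Lra Lia FunctionalExtensionality Classical.
From Coquelicot Require Import Coquelicot.
Open Scope R_scope.

(** The tail [Q_n g] lives in the eigenspaces with [lambda_j >= lambda_n], so
    for [a < b] the spectral gap gives
    [||Q_n g||_{D(A^a)} <= lambda_n^(a-b) ||Q_n g||_{D(A^b)}], and the factor
    tends to [0] because [lambda_n -> oo]. Hence the norms of [Q_n g] in a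
    strictly decreasing scale of exponents have successive ratios tending to
    [0], and each of them tends to [0] as the norm of the tail of a convergent
    series. With all coefficients [w_k = 0], the identity
    [P_n g = g + Gamma_{k,n} (- Q_n g / Gamma_{k,n})] is exact, and the
    remainders [-Q_n g / Gamma_{k,n}] tend to [0] in any [D(A^s)] with [s]
    below the exponent of [Gamma_{k,n}]. *)

Lemma Series_ge0 (a : nat -> R) : (forall n, 0 <= a n) -> ex_series a -> 0 <= Series a.
Proof.
  intros Ha Hex. replace 0 with (Series (fun n => 0 * a n))
    by (rewrite Series_scal_l; ring).
  apply Series_le; auto. intro n; specialize (Ha n); lra.
Qed.

Lemma Series_gt0 (a : nat -> R) j :
  (forall n, 0 <= a n) -> ex_series a -> 0 < a j -> 0 < Series a.
Proof.
  intros Ha Hex Hj. rewrite (Series_incr_n a (S j)) by (auto; lia). simpl pred.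
  assert (0 <= Series (fun k => a (S j + k)%nat)).
  { apply Series_ge0; auto. now apply ex_series_incr_n. }
  assert (a j <= sum_f_R0 a j).
  { destruct j; simpl; [lra|]. assert (0 <= sum_f_R0 a j) by (apply cond_pos_sum; auto). lra. }
  lra.
Qed.

Lemma ex_series_le_R (a b : nat -> R) :
  (forall n, 0 <= a n <= b n) -> ex_series b -> ex_series a.
Proof.
  intros Hab. apply (ex_series_le (K := R_AbsRing) (V := R_CompleteNormedModule)).
  intro n. change (norm (a n)) with (Rabs (a n)). rewrite Rabs_pos_eq; apply Hab.
Qed.

Lemma ex_series_scal_R (r : R) (a : nat -> R) :
  ex_series a -> ex_series (fun n => r * a n).
Proof. apply (ex_series_scal_l (K := R_AbsRing) (V := R_NormedModule)). Qed.

Lemma Series_tail_lim (a : nat -> R) :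
  ex_series a -> is_lim_seq (fun n => Series (fun k => a (n + k)%nat)) 0.
Proof.
  intros Hex. apply is_lim_seq_incr_1.
  apply is_lim_seq_ext with (fun n => Series a - sum_f_R0 a n).
  - intro n. rewrite (Series_incr_n a (S n)) by (auto; lia). simpl pred.
    replace (n + 1)%nat with (S n) by lia. ring.
  - replace (Finite 0) with (Finite (Series a - Series a)) by (f_equal; ring).
    apply is_lim_seq_minus'; [apply is_lim_seq_const|].
    apply is_lim_seq_ext with (sum_n a); [intro; apply sum_n_Reals|].
    now apply Series_correct.
Qed.

Lemma is_lim_seq_sqrt0 (u : nat -> R) :
  is_lim_seq u 0 -> is_lim_seq (fun n => sqrt (u n)) 0.
Proof.
  intros Hu. rewrite <- sqrt_0.
  apply is_lim_seq_continuous; auto. apply continuity_pt_sqrt; lra.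
Qed.

Lemma is_lim_seq_Rpower_neg (u : nat -> R) (e : R) :
  is_lim_seq u p_infty -> e < 0 -> is_lim_seq (fun n => Rpower (u n) e) 0.
Proof.
  intros Hu He. apply is_lim_seq_spec in Hu. apply is_lim_seq_spec. intro eps.
  destruct (Hu (exp (ln eps / e))) as [N HN]. exists N. intros n Hn.
  specialize (HN n Hn). rewrite Rminus_0_r. unfold Rpower.
  rewrite Rabs_pos_eq by (left; apply exp_pos).
  rewrite <- (exp_ln eps) by apply cond_pos. apply exp_increasing.
  apply ln_increasing in HN; [|apply exp_pos]. rewrite ln_exp in HN.
  apply Rmult_lt_reg_r with (/ - e); [apply Rinv_0_lt_compat; lra|].
  replace (e * ln (u n) * / - e) with (- ln (u n)) by (field; lra).
  replace (ln eps * / - e) with (- (ln eps / e)) by (field; lra). lra.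
Qed.

Section SpectralScale.

Variable lam : nat -> R.
Hypothesis Hlam : stokes_eigen lam.

Lemma stokes_eigen_le m j : (m <= j)%nat -> lam m <= lam j.
Proof.
  destruct Hlam as [_ [Hmono _]]. intros Hmj.
  induction Hmj; [lra|]. specialize (Hmono m0). lra.
Qed.

Lemma stokes_eigen_gt0 j : 0 < lam j.
Proof.
  destruct Hlam as [H0 _].
  apply Rlt_le_trans with (lam 0%nat); [exact H0|]. apply stokes_eigen_le; lia.
Qed.

Lemma DA_term_ge0 a c j : 0 <= DA_term lam a c j.
Proof.
  unfold DA_term, Rpower. apply Rmult_le_pos; [left; apply exp_pos|].
  rewrite <- Rsqr_pow2. apply Rle_0_sqr.
Qed.

Lemma DA_term_Qn a n c j :
  DA_term lam a (Qn n c) j = if Nat.ltb j n then 0 else DA_term lam a c j.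
Proof. unfold DA_term, Qn. destruct (Nat.ltb j n); simpl; ring. Qed.

Lemma DA_term_scale a r c j : DA_term lam a (escale r c) j = r² * DA_term lam a c j.
Proof. unfold DA_term, escale, Rsqr. ring. Qed.

(* Spectral gap: [lambda_j^(2a) <= lambda_m^(2(a-b)) lambda_j^(2b)] for [j >= m]. *)
Lemma DA_term_Qn_le a b m c j : a <= b ->
  DA_term lam a (Qn m c) j <= Rpower (lam m) (2 * (a - b)) * DA_term lam b (Qn m c) j.
Proof.
  intros Hab. rewrite !DA_term_Qn. destruct (Nat.ltb j m) eqn:Ejm; [lra|].
  apply Nat.ltb_ge in Ejm. unfold DA_term. rewrite <- Rmult_assoc.
  apply Rmult_le_compat_r; [rewrite <- Rsqr_pow2; apply Rle_0_sqr|].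
  replace (2 * a) with (2 * (a - b) + 2 * b) by ring. rewrite Rpower_plus.
  apply Rmult_le_compat_r; [unfold Rpower; left; apply exp_pos|].
  assert (Hln : 2 * (a - b) * ln (lam j) <= 2 * (a - b) * ln (lam m)).
  { apply Rmult_le_compat_neg_l; [lra|].
    apply ln_le; [apply stokes_eigen_gt0 | now apply stokes_eigen_le]. }
  unfold Rpower. destruct Hln as [Hlt | Heq]; [left; now apply exp_increasing | right; now rewrite Heq].
Qed.

Lemma inDA_Qn a n c : inDA lam a c -> inDA lam a (Qn n c).
Proof.
  apply ex_series_le_R. intro j. split; [apply DA_term_ge0|].
  rewrite DA_term_Qn. destruct (Nat.ltb j n); [apply DA_term_ge0 | lra].
Qed.

Lemma inDA_scale a r c : inDA lam a c -> inDA lam a (escale r c).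
Proof.
  intros Hc. apply (ex_series_ext (K := R_AbsRing)) with (fun j => r² * DA_term lam a c j).
  - intro j. symmetry. apply DA_term_scale.
  - now apply ex_series_scal_R.
Qed.

Lemma inDA_zero a : inDA lam a ezero.
Proof.
  exists 0. cut (is_lim_seq (sum_n (DA_term lam a ezero)) 0); [easy|].
  apply (is_lim_seq_ext (fun _ => 0)); [|apply is_lim_seq_const].
  intro n. rewrite <- (Rmult_0_r (INR (S n))), <- sum_n_const.
  apply sum_n_ext. intro j. unfold DA_term, ezero. simpl. ring.
Qed.

Lemma Qn_0 c : Qn 0 c = c.
Proof. apply functional_extensionality; intro j. unfold Qn. now destruct j. Qed.

Lemma inDA_le a b c : a <= b -> inDA lam b c -> inDA lam a c.
Proof.
  intros Hab Hc. rewrite <- (Qn_0 c) in Hc |- *.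
  apply ex_series_le_R with (fun j => Rpower (lam 0%nat) (2 * (a - b)) * DA_term lam b (Qn 0 c) j).
  - intro j. split; [apply DA_term_ge0 | now apply DA_term_Qn_le].
  - now apply ex_series_scal_R.
Qed.

Lemma Qn_neq0 n c : Qn n c <> ezero -> exists j, (n <= j)%nat /\ c j <> 0.
Proof.
  intros Hq. apply NNPP; intro Hnone. apply Hq, functional_extensionality; intro j.
  unfold Qn, ezero. destruct (Nat.ltb j n) eqn:Ejn; [reflexivity|].
  apply Nat.ltb_ge in Ejn. apply NNPP; intro Hcj. apply Hnone. now exists j.
Qed.

Lemma Series_DA_term_Qn a n c :
  Series (DA_term lam a (Qn n c)) = Series (fun k => DA_term lam a c (n + k)%nat).
Proof.
  rewrite (Series_incr_n_aux _ n).
  - apply Series_ext. intro k. rewrite DA_term_Qn.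
    replace (Nat.ltb (n + k) n) with false by (symmetry; apply Nat.ltb_ge; lia). reflexivity.
  - intros k Hk. rewrite DA_term_Qn. replace (Nat.ltb k n) with true by (symmetry; now apply Nat.ltb_lt).
    reflexivity.
Qed.

Lemma normDA_scale a r c :
  inDA lam a c -> normDA lam a (escale r c) = Rabs r * normDA lam a c.
Proof.
  intros Hc. unfold normDA.
  rewrite (Series_ext _ (fun j => r² * DA_term lam a c j)) by apply DA_term_scale.
  rewrite Series_scal_l, sqrt_mult_alt by apply Rle_0_sqr.
  now rewrite sqrt_Rsqr_abs.
Qed.

Lemma Series_DA_term_Qn_gt0 a n c :
  inDA lam a c -> Qn n c <> ezero -> 0 < Series (DA_term lam a (Qn n c)).
Proof.
  intros Hc Hq. destruct (Qn_neq0 n c Hq) as [j [Hnj Hcj]].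
  apply Series_gt0 with j; [intro; apply DA_term_ge0 | now apply inDA_Qn|].
  rewrite DA_term_Qn. replace (Nat.ltb j n) with false by (symmetry; now apply Nat.ltb_ge).
  unfold DA_term. apply Rmult_lt_0_compat; [unfold Rpower; apply exp_pos|].
  rewrite <- Rsqr_pow2. now apply Rsqr_pos_lt.
Qed.

Lemma normDA_Qn_gt0 a n c :
  inDA lam a c -> Qn n c <> ezero -> 0 < normDA lam a (Qn n c).
Proof. intros; now apply sqrt_lt_R0, Series_DA_term_Qn_gt0. Qed.

Lemma normDA_Qn_lim a c :
  inDA lam a c -> is_lim_seq (fun n => normDA lam a (Qn n c)) 0.
Proof.
  intros Hc. apply is_lim_seq_sqrt0.
  apply is_lim_seq_ext with (fun n => Series (fun k => DA_term lam a c (n + k)%nat)).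
  - intro n. symmetry. apply Series_DA_term_Qn.
  - now apply Series_tail_lim.
Qed.

Lemma normDA_Qn_le a b n c : a <= b -> inDA lam b c ->
  normDA lam a (Qn n c) <= Rpower (lam n) (a - b) * normDA lam b (Qn n c).
Proof.
  intros Hab Hc. unfold normDA.
  assert (Hsq : Rpower (lam n) (a - b) = sqrt (Rpower (lam n) (2 * (a - b)))).
  { replace (2 * (a - b)) with ((a - b) + (a - b)) by ring.
    rewrite Rpower_plus, sqrt_square; [reflexivity|]. unfold Rpower; left; apply exp_pos. }
  rewrite Hsq, <- sqrt_mult_alt by (unfold Rpower; left; apply exp_pos).
  apply sqrt_le_1_alt. rewrite <- Series_scal_l. apply Series_le.
  - intro j. split; [apply DA_term_ge0 | now apply DA_term_Qn_le].
  - now apply ex_series_scal_R, inDA_Qn.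
Qed.

Lemma normDA_Qn_ratio_lim a b c : a < b -> inDA lam b c -> (forall n, Qn n c <> ezero) ->
  is_lim_seq (fun n => normDA lam a (Qn n c) / normDA lam b (Qn n c)) 0.
Proof.
  intros Hab Hc Hq.
  apply is_lim_seq_le_le with (fun _ => 0) (fun n => Rpower (lam n) (a - b)).
  - intro n. pose proof (normDA_Qn_gt0 b n c Hc (Hq n)) as Hb. split.
    + apply Rmult_le_pos; [apply sqrt_pos | left; now apply Rinv_0_lt_compat].
    + apply Rmult_le_reg_r with (normDA lam b (Qn n c)); [exact Hb|].
      unfold Rdiv. rewrite Rmult_assoc, Rinv_l, Rmult_1_r by lra.
      apply normDA_Qn_le; [lra | exact Hc].
  - apply is_lim_seq_const.
  - destruct Hlam as [_ [_ Hinf]]. apply is_lim_seq_Rpower_neg; [exact Hinf | lra].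
Qed.

Lemma normDA_normalize a c : inDA lam a c -> 0 < normDA lam a c ->
  normDA lam a (escale (- / normDA lam a c) c) = 1.
Proof.
  intros Hc Hpos. rewrite normDA_scale by exact Hc.
  rewrite Rabs_Ropp, Rabs_pos_eq by (left; now apply Rinv_0_lt_compat).
  field. lra.
Qed.

End SpectralScale.

Lemma psum_ezero Gam n m : psum Gam (fun _ => ezero) n m = ezero.
Proof.
  induction m as [|m IH]; simpl; [reflexivity|]. rewrite IH.
  apply functional_extensionality; intro j. unfold eadd, escale, ezero. ring.
Qed.

Lemma esub_ezero x : esub x ezero = x.
Proof. apply functional_extensionality; intro j. unfold esub, ezero. ring. Qed.

Lemma Pn_eq_Qn_remainder Gam g n m G : G <> 0 ->
  Pn n g = eadd (eadd g (psum Gam (fun _ => ezero) n m)) (escale G (escale (- / G) (Qn n g))).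
Proof.
  intros HG. rewrite psum_ezero. apply functional_extensionality; intro j.
  unfold Pn, Qn, eadd, escale, ezero. destruct (Nat.ltb j n); field; exact HG.
Qed.

Lemma decreasing_le_first (alpha : nat -> R) :
  (forall k, alpha (S k) < alpha k) -> forall k, alpha k <= alpha 0%nat.
Proof. intros Hdec k. induction k as [|k IH]; [lra|]. specialize (Hdec k). lra. Qed.

Lemma decreasing_gt_Glb (alpha : nat -> R) (s : R) :
  (forall k, alpha (S k) < alpha k) ->
  Rbar_le s (Glb_Rbar (fun x => exists k, x = alpha k)) -> forall k, s < alpha k.
Proof.
  intros Hdec Hs k. destruct (Glb_Rbar_correct (fun x => exists k, x = alpha k)) as [Hlb _].
  assert (Hsk : Rbar_le s (alpha (S k))) by (eapply Rbar_le_trans; [exact Hs | apply Hlb; eauto]).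
  simpl in Hsk. specialize (Hdec k). lra.
Qed.

Lemma Pn_degenerate_expansion lam g a0 (z gam : nat -> R) :
  stokes_eigen lam -> inDA lam a0 g -> (forall n, Qn n g <> ezero) ->
  (forall k, z k <= a0) ->
  (forall k, (1 <= k)%nat -> gam k <= a0) ->
  (forall k, (1 <= k)%nat -> gam (S k) < gam k) ->
  (forall k, (1 <= k)%nat -> z k < gam k) ->
  degenerate_expansion (fun k => inDA lam (z k)) (fun k => normDA lam (z k))
    (fun n => Pn n g) g (fun _ => ezero)
    (fun k n => escale (- / normDA lam (gam k) (Qn n g)) (Qn n g))
    (fun k n => normDA lam (gam k) (Qn n g)).
Proof.
  intros Hlam Hg Hq Hz Hgam Hgam_dec Hz_gam.
  assert (HgD : forall a, a <= a0 -> inDA lam a g) by (intros; eapply inDA_le; eauto).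
  assert (HGpos : forall k n, (1 <= k)%nat -> 0 < normDA lam (gam k) (Qn n g))
    by (intros; apply normDA_Qn_gt0; auto).
  repeat split.
  - now apply HgD.
  - intros k _. apply inDA_zero.
  - intros k n _ _. now apply inDA_scale, inDA_Qn, HgD.
  - intros k n Hk _. now apply HGpos.
  - apply normDA_Qn_lim; auto.
  - intros k Hk. apply normDA_Qn_ratio_lim; auto.
  - intros k Hk.
    apply is_lim_seq_ext with
      (fun n => normDA lam (z k) (Qn n g) / normDA lam (gam k) (Qn n g)).
    + intro n. rewrite esub_ezero, normDA_scale by (now apply inDA_Qn, HgD).
      rewrite Rabs_Ropp, Rabs_pos_eq by (left; now apply Rinv_0_lt_compat, HGpos).
      unfold Rdiv. ring.
    + apply normDA_Qn_ratio_lim; auto.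
  - intros n k _ Hk. apply Pn_eq_Qn_remainder. apply Rgt_not_eq. now apply HGpos.
  - now left.
Qed.

Theorem mainTheorem5 (lam : nat -> R) (alpha : nat -> R) (g : elt) :
  stokes_eigen lam ->
  (forall k, 0 < alpha k) ->
  (forall k, alpha (S k) < alpha k) ->
  inDA lam (alpha 0%nat) g ->
  (forall n, Qn n g <> ezero) ->
  (* (a) *)
  (let Gt := fun k n => normDA lam (alpha (k - 1)%nat) (Qn n g) in
   let wt := fun k n => escale (- / Gt k n) (Qn n g) in
   degenerate_expansion (fun k => inDA lam (alpha k)) (fun k => normDA lam (alpha k))
     (fun n => Pn n g) g (fun _ => ezero) wt Gt /\
   (forall k n, (1 <= k)%nat -> (1 <= n)%nat ->
      normDA lam (alpha (k - 1)%nat) (wt k n) = 1)) /\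
  (* (b): s in [0, beta], beta = inf_k alpha_k *)
  (forall s : R, 0 <= s -> Rbar_le s (Glb_Rbar (fun x => exists k, x = alpha k)) ->
   let G := fun k n => normDA lam (alpha k) (Qn n g) in
   let w := fun k n => escale (- / G k n) (Qn n g) in
   degenerate_expansion (fun _ => inDA lam s) (fun _ => normDA lam s)
     (fun n => Pn n g) g (fun _ => ezero) w G).
Proof.
  intros Hlam _ Hdec Hg Hq.
  pose proof (decreasing_le_first alpha Hdec) as Hle0.
  split.
  - intros Gt wt. split.
    + apply (Pn_degenerate_expansion lam g (alpha 0%nat) alpha (fun k => alpha (k - 1)%nat));
        auto; intros k Hk.
      * now replace (S k - 1)%nat with (S (k - 1)) by lia.
      * replace k with (S (k - 1)) at 1 by lia. apply Hdec.
    + intros k n _ _. apply normDA_normalize; auto.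
      * now apply inDA_Qn, (inDA_le lam Hlam _ (alpha 0%nat)).
      * apply normDA_Qn_gt0; [now apply (inDA_le lam Hlam _ (alpha 0%nat)) | apply Hq].
  - intros s _ Hs G w.
    pose proof (decreasing_gt_Glb alpha s Hdec Hs) as Hs_lt.
    apply (Pn_degenerate_expansion lam g (alpha 0%nat) (fun _ => s) alpha); auto.
    intro k. now apply Rlt_le.
Qed.
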